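(* Let $G$, $k\ge 3$, the choice strings $c_{i,j}$, the template string $t$, $L$ and $d$ be as in the binary construction in the context, and let $s\in\{0,1\}^L$ be a solution, i.e. $t$ and every choice string $c_{i,j}$ ($1\le i<j\le k$) have a substring of length $L$ at Hamming distance at most $d$ from $s$. Then the encoding part of $s$ contains exactly $k$ symbols $1$.
   Context: Let $G=(V,E)$ be an undirected simple graph with $V=\{v_1,\dots,v_n\}$ and edge set $E=\{e_1,\dots,e_m\}$, and let $k\ge 3$ be an integer; put $N=\binom{k}{2}$ and $b=nk-2k+2$. All strings are over $\{0,1\}$. For $1\le p\le n$ let $\mathrm{number}(p)=0^{p-1}10^{n-p}$. Let $\mathrm{front\_tag}=(1^{3nk}0)^{nk}$ (length $(3nk+1)nk$). Order the pairs $(i,j)$, $1\le i<j\le k$, lexicographically and let $i'$ be the position of $(i,j)$ in this order. For an edge $e$ joining $v_r,v_s$ with $r<s$ let $\mathrm{encode}(i,j,e)=(0^n)^{i-1}\,\mathrm{number}(r)\,(0^n)^{j-i-1}\,\mathrm{number}(s)\,(0^n)^{k-j}$, $\mathrm{back\_tag}(i')=0^{(i'-1)b}1^{b}0^{(N-i')b}$, and $\mathrm{block}(i,j,e)=\mathrm{front\_tag}\,\mathrm{encode}(i,j,e)\,\mathrm{back\_tag}(i')$. The choice string is $c_{i,j}=\mathrm{block}(i,j,e_1)\cdots\mathrm{block}(i,j,e_m)$. The template string is $t=\mathrm{front\_tag}\,1^{nk}\,0^{Nb}$. Set $L=(3nk+1)nk+nk+Nb$ and $d=nk-k$. For a string $s$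 of length $L$, its encoding part is the substring of its positions $(3nk+1)nk+1,\dots,(3nk+1)nk+nk$. *)

From mathcomp Require Import all_boot.
Set Implicit Arguments. Unset Strict Implicit. Unset Printing Implicit Defensive.

Definition zeros (l : nat) : seq bool := nseq l false.
Definition ones (l : nat) : seq bool := nseq l true.

Definition number (n p : nat) : seq bool := zeros (p - 1) ++ [:: true] ++ zeros (n - p).

Definition front_tag (n k : nat) : seq bool :=
  flatten (nseq (n * k) (ones (3 * n * k) ++ [:: false])).

Definition Npairs (k : nat) : nat := 'C(k, 2).
Definition bparam (n k : nat) : nat := n * k - 2 * k + 2.

Definition pairs (k : nat) : seq (nat * nat) :=
  flatten [seq [seq (i, j) | j <- iota i.+1 (k - i)] | i <- iota 1 k].

Definition pair_pos (k i j : nat) : nat := (index (i, j) (pairs k)).+1.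

(* encode(i,j,e) for an edge e = (r,s), r < s *)
Definition encode (n k i j : nat) (e : nat * nat) : seq bool :=
  flatten (nseq (i - 1) (zeros n)) ++ number n e.1 ++
  flatten (nseq (j - i - 1) (zeros n)) ++ number n e.2 ++
  flatten (nseq (k - j) (zeros n)).

Definition back_tag (n k i' : nat) : seq bool :=
  zeros ((i' - 1) * bparam n k) ++ ones (bparam n k) ++
  zeros ((Npairs k - i') * bparam n k).

Definition block (n k i j : nat) (e : nat * nat) : seq bool :=
  front_tag n k ++ encode n k i j e ++ back_tag n k (pair_pos k i j).

Definition choice_string (n k : nat) (E : seq (nat * nat)) (i j : nat) : seq bool :=
  flatten [seq block n k i j e | e <- E].

Definition template (n k : nat) : seq bool :=
  front_tag n k ++ ones (n * k) ++ zeros (Npairs k * bparam n k).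

Definition Lparam (n k : nat) : nat :=
  (3 * n * k + 1) * (n * k) + n * k + Npairs k * bparam n k.
Definition dparam (n k : nat) : nat := n * k - k.

(* Hamming distance of two strings (used on strings of equal length) *)
Definition hamming (s u : seq bool) : nat :=
  count (fun p : bool * bool => p.1 != p.2) (zip s u).

Definition close_substring (d : nat) (s c : seq bool) : Prop :=
  exists p, p + size s <= size c /\ hamming s (take (size s) (drop p c)) <= d.

Definition encoding_part (n k : nat) (s : seq bool) : seq bool :=
  take (n * k) (drop ((3 * n * k + 1) * (n * k)) s).

(* Write K = nk, P = 3K + 1, b = bparam n k and d = K - k.  The front tag is
   P-periodic with a single 0 per period, the encoding and back parts of a block
   carry only b + 2 ones, and the back of the template is 0.  Let u be a length-L
   window of a choice string at distance <= d from s; then u is at distance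
   <= 2d from the template t.  If u does not start at a block boundary, then
   either two copies of the front tag overlap with a shift that is not a multiple
   of P, giving two mismatches per period, or a run of 3K ones of one string
   faces a sparse region of the other; in every case t and u differ in more than
   2d places.  So s is within d of a whole block(i,j,e).
   Let w, z and z_i' count the ones of s in its encoding part, its back part and
   the i'-th segment of its back part.  The template gives k + z <= w, a block
   for the pair of position i' gives w + z <= k + 2 z_i'.  The pairs (1,2) and
   (1,3) occupy the disjoint segments 1 and 2, so 2w + 2z <= 2k + 2z, i.e. w <= k. *)

From mathcomp Require Import all_boot zify.
Set Implicit Arguments. Unset Strict Implicit. Unset Printing Implicit Defensive.

(** * Counting along intervals *)

Section CountPointwise.
Variables (T : Type) (s : seq T).

Lemma count_add_le (a1 a2 g : pred T) :
  (forall x, a1 x + a2 x <= g x) -> count a1 s + count a2 s <= count g s.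
Proof.
move=> le_x; elim: s => //= x s' IH.
by have := le_x x; lia.
Qed.

Lemma count_le_add (a1 a2 g : pred T) :
  (forall x, g x <= a1 x + a2 x) -> count g s <= count a1 s + count a2 s.
Proof.
move=> le_x; elim: s => //= x s' IH.
by have := le_x x; lia.
Qed.

Lemma count_le_mismatch (f g : pred T) :
  count f s <= count g s + count (fun x => f x != g x) s.
Proof. by apply: count_le_add => x; case: (f x); case: (g x). Qed.

Lemma count_le_mismatch_r (f g : pred T) :
  count g s <= count f s + count (fun x => f x != g x) s.
Proof. by apply: count_le_add => x; case: (f x); case: (g x). Qed.

End CountPointwise.

Lemma count_iota_sub (f : pred nat) a m b l :
  a <= b -> b + l <= a + m -> count f (iota b l) <= count f (iota a m).
Proof.
move=> le_ab le_end.
have -> : m = (b - a) + (l + (a + m - b - l)) by lia.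
rewrite !iotaD !count_cat subnKC //.
lia.
Qed.

Lemma count_iota_disjoint (f : pred nat) a1 l1 a2 l2 m :
  a1 + l1 <= a2 -> a2 + l2 <= m ->
  count f (iota a1 l1) + count f (iota a2 l2) <= count f (iota 0 m).
Proof.
move=> le12 le2m.
have -> : m = a1 + (l1 + ((a2 - a1 - l1) + (l2 + (m - a2 - l2)))) by lia.
rewrite !iotaD !count_cat /= add0n.
have -> : a1 + l1 + (a2 - a1 - l1) = a2 by lia.
lia.
Qed.

Lemma count_iota_const (f : pred nat) a l (v : bool) :
  (forall x, a <= x < a + l -> f x = v) -> count f (iota a l) = v * l.
Proof.
move=> f_v; rewrite (@eq_in_count _ _ (fun _ => v)); last first.
  by move=> x; rewrite mem_iota; apply: f_v.
by case: v {f_v}; [rewrite count_predT size_iota mul1n | rewrite count_pred0].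
Qed.

(** * The periodic front tag *)

Section ResiduesInWindows.
Variables (P c d : nat).
Hypothesis c_ltP : c < P.

Let residue x := (x + d) %% P == c.

Lemma count_residue_period a : count residue (iota a P) = 1.
Proof.
have -> : count residue (iota a P) = count (fun y => y %% P == c) (iota (d + a) P).
  by rewrite iotaDl count_map; apply: eq_count => x /=; rewrite /residue addnC.
elim: (d + a) => [|m IH].
  rewrite (@eq_in_count _ _ (pred1 c)); last first.
    by move=> y; rewrite mem_iota => /andP [_ y_lt]; rewrite modn_small.
  by rewrite count_uniq_mem ?iota_uniq // mem_iota c_ltP.
case: P c_ltP IH => // P' _ IH.
rewrite -[X in iota m.+1 X]addn1 iotaD count_cat /= addSnnS modnDr.
move: IH => /=; lia.
Qed.

Lemma count_residue_periods a j : count residue (iota a (j * P)) = j.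
Proof.
elim: j a => [|j IH] a //.
by rewrite mulSn iotaD count_cat count_residue_period IH add1n.
Qed.

Lemma count_residue_ge a j l : j * P <= l -> j <= count residue (iota a l).
Proof.
move=> le_jl; rewrite -{1}(count_residue_periods a j).
by apply: count_iota_sub; lia.
Qed.

Lemma count_residue_le a l : count residue (iota a l) <= l %/ P + 1.
Proof.
rewrite {1}(divn_eq l P) iotaD count_cat count_residue_periods leq_add2l.
rewrite -(count_residue_period (a + l %/ P * P)).
apply: count_iota_sub => //; rewrite leq_add2l ltnW // ltn_pmod //; lia.
Qed.

End ResiduesInWindows.

Definition tag_bit (K x : nat) : bool := x %% (3 * K + 1) < 3 * K.

Lemma tag_bitN K x : ~~ tag_bit K x = (x %% (3 * K + 1) == 3 * K).
Proof.
have : x %% (3 * K + 1) < 3 * K + 1 by rewrite ltn_pmod // addn1.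
rewrite /tag_bit; lia.
Qed.

Lemma tag_bit_small K x : x < 3 * K -> tag_bit K x.
Proof. by move=> lt_x; rewrite /tag_bit modn_small // addn1 ltnS ltnW. Qed.

Lemma tag_bitMD K m x : tag_bit K (m * (3 * K + 1) + x) = tag_bit K x.
Proof. by rewrite /tag_bit modnMDl. Qed.

(* A window of length [l] meets at most [l %/ P + 1] zeros of the tag, and [P >= 19]. *)
Lemma count_tag_bit_ge K d a l :
  6 <= K -> 18 * l <= 19 * count (fun x => tag_bit K (x + d)) (iota a l) + 19.
Proof.
move=> K_ge6.
have le_zeros : count (predC (fun x => tag_bit K (x + d))) (iota a l) <= l %/ (3 * K + 1) + 1.
  rewrite (@eq_count _ _ (fun x => (x + d) %% (3 * K + 1) == 3 * K)).
    by apply: count_residue_le; rewrite addn1.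
  by move=> x /=; rewrite tag_bitN.
have le_div : 19 * (l %/ (3 * K + 1)) <= l.
  rewrite mulnC (leq_trans _ (leq_trunc_div l (3 * K + 1))) // leq_mul2l; lia.
have := count_predC (fun x => tag_bit K (x + d)) (iota a l); rewrite size_iota.
move: le_zeros le_div; set q := l %/ _; lia.
Qed.

Lemma count_tag_bit_shift K d a j l :
  d %% (3 * K + 1) != 0 -> j * (3 * K + 1) <= l ->
  2 * j <= count (fun x => tag_bit K x != tag_bit K (x + d)) (iota a l).
Proof.
move=> d_ndiv le_jl.
have c_lt : 3 * K < 3 * K + 1 by rewrite addn1.
have := count_residue_ge 0 c_lt a le_jl.
have := count_residue_ge d c_lt a le_jl.
suff : count (fun x => (x + 0) %% (3 * K + 1) == 3 * K) (iota a l) +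
       count (fun x => (x + d) %% (3 * K + 1) == 3 * K) (iota a l) <=
       count (fun x => tag_bit K x != tag_bit K (x + d)) (iota a l) by lia.
(* The zeros of the two shifted tags are mismatches, and never coincide. *)
apply: count_add_le => x; rewrite addn0 -!tag_bitN.
case: (boolP (tag_bit K x)) => tx; case: (boolP (tag_bit K (x + d))) => //= txd.
move: tx txd; rewrite !tag_bitN => /eqP x_res /eqP xd_res.
have : x + d == x + 0 %[mod 3 * K + 1] by rewrite addn0 x_res xd_res.
by rewrite eqn_modDl mod0n (negbTE d_ndiv).
Qed.

(* [T] plays the template and [U] a length-[L] window of a choice string that
   starts [r] positions after the beginning of a block: [U] first reads the tail
   of that block, then the beginning of the next one. *)
Section Misalignment.
Variables (K k b B r : nat) (T U : nat -> bool).
Local Notation P := (3 * K + 1).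
Local Notation F := (K * P).
Local Notation L := (F + K + B).

Hypotheses (k_ge3 : 3 <= k) (k_leK : 2 * k <= K).
Hypotheses (b_eq : b = K - 2 * k + 2) (kb_leB : k * b <= B).
Hypotheses (r_gt0 : 0 < r) (r_ltL : r < L).
Hypothesis T_def : forall x, T x = if x < F then tag_bit K x else x < F + K.
Hypothesis U_front : forall x, r + x < F -> U x = tag_bit K (r + x).
Hypothesis U_next : forall x, x < L -> L <= r + x < L + F -> U x = tag_bit K (r + x - L).
Hypothesis U_tail : forall a l, F <= r + a -> r + a + l <= L -> count U (iota a l) <= b + 2.

Local Notation mismatches a l := (count (fun x => T x != U x) (iota a l)).

Let F_eq : (K - 1) * P + P = F.
Proof. by rewrite -mulSnr subn1 prednK //; lia. Qed.

Let P_leF : P <= F.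
Proof. by rewrite -F_eq leq_addl. Qed.

Lemma mismatches_sub a l : a + l <= L -> mismatches a l <= mismatches 0 L.
Proof. by move=> le_aL; apply: count_iota_sub. Qed.

(* [3K (L - r)] is congruent to [-(L - r)] modulo [P]. *)
Lemma U_next_shift x :
  L - r <= x < L -> x < L - r + F -> U x = tag_bit K (x + 3 * K * (L - r)).
Proof.
move=> /andP [le_x x_lt] x_lt'.
rewrite U_next; try lia.
by rewrite (_ : x + 3 * K * (L - r) = (L - r) * P + (r + x - L)) ?tag_bitMD //; lia.
Qed.

Lemma mismatches_small_shift : r < 3 * K -> 2 * (K - k) < mismatches 0 L.
Proof.
move=> r_lt.
have r_res : r %% P != 0 by rewrite modn_small; lia.
have le_shift : 2 * (K - 1) <= mismatches 0 (F - r).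
  rewrite (@eq_in_count _ _ (fun x => tag_bit K x != tag_bit K (x + r))).
    by apply: count_tag_bit_shift => //; lia.
  move=> x; rewrite mem_iota => /andP [_ x_lt].
  by rewrite T_def ifT ?U_front 1?addnC //; lia.
have le_all : mismatches 0 (F - r) <= mismatches 0 L by apply: mismatches_sub; lia.
lia.
Qed.

Lemma mismatches_large_shift : F <= r -> L - r < 3 * K -> 2 * (K - k) < mismatches 0 L.
Proof.
move=> F_ler m_lt; set m := L - r in m_lt *.
have d_res : 3 * K * m %% P != 0.
  have : (3 * K * m + m) %% P = 0 by rewrite (_ : 3 * K * m + m = m * P) ?modnMl //; lia.
  rewrite -modnDml => mP0; apply/eqP => d0; move: mP0; rewrite d0 add0n modn_small; lia.
have le_shift : 2 * (K - 1) <= mismatches m (F - m).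
  rewrite (@eq_in_count _ _ (fun x => tag_bit K x != tag_bit K (x + 3 * K * m))).
    by apply: count_tag_bit_shift => //; lia.
  move=> x; rewrite mem_iota => /andP [m_lex x_lt].
  by rewrite T_def ifT ?U_next_shift //; lia.
have le_all : mismatches m (F - m) <= mismatches 0 L by apply: mismatches_sub; lia.
lia.
Qed.

Lemma mismatches_tail_at_start : F <= r -> 3 * K <= L - r -> 2 * (K - k) < mismatches 0 L.
Proof.
move=> F_ler le_3K.
have T_ones : count T (iota 0 (3 * K)) = 3 * K.
  rewrite (@count_iota_const _ _ _ true) ?mul1n // => x x_lt.
  by rewrite T_def ifT ?tag_bit_small; lia.
have U_few : count U (iota 0 (3 * K)) <= b + 2 by apply: U_tail; lia.
have T_le := count_le_mismatch (iota 0 (3 * K)) T U.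
have le_all : mismatches 0 (3 * K) <= mismatches 0 L by apply: mismatches_sub; lia.
lia.
Qed.

Lemma mismatches_next_front_in_back : 3 * K <= r <= B -> 2 * (K - k) < mismatches 0 L.
Proof.
move=> /andP [le_r r_leB].
have U_ones : count U (iota (L - r) (3 * K)) = 3 * K.
  rewrite (@count_iota_const _ _ _ true) ?mul1n // => x x_in.
  by rewrite U_next ?tag_bit_small; lia.
have T_zeros : count T (iota (L - r) (3 * K)) = 0.
  by rewrite (@count_iota_const _ _ _ false) // => x x_in; rewrite T_def ifF; lia.
have U_le := count_le_mismatch_r (iota (L - r) (3 * K)) T U.
have le_all : mismatches (L - r) (3 * K) <= mismatches 0 L by apply: mismatches_sub; lia.
lia.
Qed.

Lemma mismatches_tail_in_middle : B < r < F -> 2 * (K - k) < mismatches 0 L.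
Proof.
move=> /andP [B_ltr r_ltF].
set G := K + B.
have K_ge6 : 6 <= K by lia.
have T_W1 : 18 * G <= 19 * count T (iota (F - r) G) + 19.
  apply: leq_trans (count_tag_bit_ge 0 (F - r) G K_ge6) _.
  rewrite leq_add2r leq_mul2l; apply/orP; right.
  rewrite (@eq_in_count _ T (fun x => (x < F) ==> tag_bit K x)); last first.
    by move=> x; rewrite mem_iota T_def => /andP [_ x_lt]; case: ifP => //= _; lia.
  by apply: sub_count => x; rewrite addn0 => ->; rewrite implybT.
have U_W1 : count U (iota (F - r) G) <= b + 2 by apply: U_tail; lia.
have mis_W1 := count_le_mismatch (iota (F - r) G) T U.
have U_W2 : 18 * B <= 19 * count U (iota (F + K) B) + 19.
  rewrite (@eq_in_count _ U (fun x => tag_bit K (x + 3 * K * (L - r)))).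
    exact: count_tag_bit_ge.
  by move=> x; rewrite mem_iota => /andP [le_x x_lt]; rewrite U_next_shift; lia.
have T_W2 : count T (iota (F + K) B) = 0.
  by rewrite (@count_iota_const _ _ _ false) // => x x_in; rewrite T_def ifF; lia.
have mis_W2 := count_le_mismatch_r (iota (F + K) B) T U.
have disj : mismatches (F - r) G + mismatches (F + K) B <= mismatches 0 L.
  by apply: count_iota_disjoint; lia.
have B_ge3b : 3 * b <= B by apply: leq_trans kb_leB; rewrite leq_mul2r k_ge3 orbT.
have B_ge2k : k * 2 <= B by apply: leq_trans kb_leB; rewrite leq_mul2l; lia.
lia.
Qed.

Lemma mismatches_misaligned : 2 * (K - k) < mismatches 0 L.
Proof.
case: (ltnP r (3 * K)) => [|le_r]; first exact: mismatches_small_shift.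
case: (leqP r B) => [r_leB|B_ltr]; first by apply: mismatches_next_front_in_back; rewrite le_r.
case: (ltnP r F) => [r_ltF|F_ler]; first by apply: mismatches_tail_in_middle; rewrite B_ltr.
case: (ltnP (L - r) (3 * K)); [exact: mismatches_large_shift | exact: mismatches_tail_at_start].
Qed.

End Misalignment.

(** * Hamming distance and uniform concatenations *)

Lemma count_nth_iota (s : seq bool) a l :
  count (nth false s) (iota a l) = count id (take l (drop a s)).
Proof.
elim: l a => [|l IH] a; first by rewrite take0.
rewrite /= IH; case: (ltnP a (size s)) => [a_lt|a_ge].
  by rewrite (drop_nth false a_lt).
by rewrite nth_default // !drop_oversize // leqW.
Qed.

Lemma count_take_drop_le (s : seq bool) a l : count id (take l (drop a s)) <= count id s.
Proof.
rewrite -{2}(cat_take_drop a s) -{2}(cat_take_drop l (drop a s)) !count_cat.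
lia.
Qed.

Lemma count_take_add_le (s : seq bool) m l :
  count id (take m s) + count id (take l (drop m s)) <= count id s.
Proof.
rewrite -{3}(cat_take_drop m s) count_cat leq_add2l.
by rewrite -{2}(cat_take_drop l (drop m s)) count_cat leq_addr.
Qed.

Lemma hamming_count (a b : seq bool) : size a = size b ->
  hamming a b = count (fun x => nth false a x != nth false b x) (iota 0 (size a)).
Proof.
elim: a b => [|x a IH] [|y b] //= [] size_ab.
rewrite /hamming /= -/(hamming a b) IH //.
by rewrite -[iota 1 _]/(iota (1 + 0) _) iotaDl count_map.
Qed.

Lemma hamming_sym (a b : seq bool) : hamming a b = hamming b a.
Proof.
elim: a b => [|x a IH] [|y b] //=.
by rewrite /hamming /= -!/(hamming _ _) IH eq_sym.
Qed.

Lemma hamming_cat (a1 a2 b1 b2 : seq bool) : size a1 = size b1 ->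
  hamming (a1 ++ a2) (b1 ++ b2) = hamming a1 b1 + hamming a2 b2.
Proof. by move=> size_1; rewrite /hamming zip_cat // count_cat. Qed.

Lemma hamming_catr (s a1 a2 : seq bool) : size a1 <= size s ->
  hamming s (a1 ++ a2) = hamming (take (size a1) s) a1 + hamming (drop (size a1) s) a2.
Proof.
by move=> le_a1; rewrite -{1}(cat_take_drop (size a1) s) hamming_cat // size_takel.
Qed.

Lemma hamming_triangle (a b c : seq bool) : size a = size b -> size b = size c ->
  hamming a c <= hamming a b + hamming b c.
Proof.
move=> size_ab size_bc.
rewrite !hamming_count -?size_ab // -?size_bc //.
by apply: count_le_add => x; case: (nth false a x); case: (nth false b x); case: (nth false c x).
Qed.

Lemma hamming_zeros (a : seq bool) l : size a = l -> hamming a (zeros l) = count id a.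
Proof. by move<-; elim: a => //= x a IH; rewrite /hamming /= -/(hamming _ _) IH; case: x. Qed.

Lemma hamming_ones (a : seq bool) l : size a = l -> hamming a (ones l) = l - count id a.
Proof.
move<-; elim: a => //= x a IH; rewrite /hamming /= -/(hamming _ _) IH.
by case: x => /=; have := count_size id a; lia.
Qed.

Lemma count_le_hamming (a b : seq bool) : size a = size b ->
  count id a <= count id b + hamming a b.
Proof.
elim: a b => [|x a IH] [|y b] //= [] /IH le_ab.
by rewrite /hamming /= -/(hamming _ _); case: x; case: y => /=; lia.
Qed.

Lemma nth_drop_cat_take (T : Type) (x0 : T) (X Y : seq T) r x :
  r <= size Y -> x < size X ->
  nth x0 (drop r X ++ take r Y) x =
  if x < size X - r then nth x0 X (r + x) else nth x0 Y (x - (size X - r)).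
Proof.
move=> r_le x_lt; rewrite nth_cat size_drop nth_drop.
by case: ltnP => // le_x; rewrite nth_take //; lia.
Qed.

Section UniformFlatten.
Variables (T : Type) (L : nat) (ss : seq (seq T)).
Hypothesis size_ss : all (fun w => size w == L) ss.

Lemma size_flatten_uniform : size (flatten ss) = size ss * L.
Proof.
elim: ss size_ss => //= w ss' IH /andP [/eqP size_w /IH size_ss'].
by rewrite size_cat size_w size_ss' mulSn.
Qed.

Lemma drop_flatten_uniform q : drop (q * L) (flatten ss) = flatten (drop q ss).
Proof.
elim: ss size_ss q => [|w ss' IH] /= => [_ q|/andP [/eqP size_w size_ss'] [|q]].
- by [].
- by rewrite mul0n drop0.
- by rewrite mulSnr -drop_drop drop_size_cat // IH.
Qed.

Lemma take_drop_flatten_uniform q r : r <= L ->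
  take L (drop (q * L + r) (flatten ss)) = drop r (nth [::] ss q) ++ take r (nth [::] ss q.+1).
Proof.
move=> r_leL.
rewrite addnC -drop_drop drop_flatten_uniform.
have -> : nth [::] ss q = nth [::] (drop q ss) 0 by rewrite nth_drop addn0.
have -> : nth [::] ss q.+1 = nth [::] (drop q ss) 1 by rewrite nth_drop addn1.
have : all (fun w => size w == L) (drop q ss).
  by move: size_ss; rewrite -{1}(cat_take_drop q ss) all_cat => /andP [].
case: (drop q ss) => [|w rest] //= /andP [/eqP size_w size_rest].
have -> : drop r (w ++ flatten rest) = drop r w ++ flatten rest.
  rewrite drop_cat; case: ltnP => // r_ge.
  have -> : r = size w by lia.
  by rewrite subnn drop0 drop_size.
rewrite take_cat size_drop size_w ltnNge leq_subr /= subKn //.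
case: rest size_rest => [|v rest] //= /andP [/eqP size_v _].
by rewrite takel_cat // size_v.
Qed.

End UniformFlatten.

Lemma nth_flatten_uniform (T : Type) (x0 : T) L (ss : seq (seq T)) q y :
  all (fun w => size w == L) ss -> y < L ->
  nth x0 (flatten ss) (q * L + y) = nth x0 (nth [::] ss q) y.
Proof.
move=> size_ss y_lt.
have := take_drop_flatten_uniform size_ss q (leq0n L).
by rewrite addn0 drop0 take0 cats0 => <-; rewrite nth_take // nth_drop.
Qed.

(** * The construction *)

Lemma Npairs_ge k : 3 <= k -> k <= Npairs k.
Proof. by case: k => [|[|[|k]]] // _; rewrite /Npairs !binS !bin1 !bin0; lia. Qed.

Definition valid_edge (n : nat) (e : nat * nat) := (0 < e.1) && (e.1 < e.2) && (e.2 <= n).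

Definition back_part (n k : nat) (s : seq bool) : seq bool :=
  drop (n * k) (drop ((3 * n * k + 1) * (n * k)) s).

Definition back_segment (n k i' : nat) (v : seq bool) : seq bool :=
  take (bparam n k) (drop ((i' - 1) * bparam n k) v).

Lemma front_tag_uniform n k :
  all (fun w => size w == 3 * n * k + 1) (nseq (n * k) (ones (3 * n * k) ++ [:: false])).
Proof. by rewrite all_nseq size_cat size_nseq eqxx orbT. Qed.

Lemma size_front_tag n k : size (front_tag n k) = (3 * n * k + 1) * (n * k).
Proof. by rewrite (size_flatten_uniform (front_tag_uniform n k)) size_nseq mulnC. Qed.

Lemma nth_front_tag n k x : x < (3 * n * k + 1) * (n * k) ->
  nth false (front_tag n k) x = tag_bit (n * k) x.
Proof.
move=> x_lt; set P := 3 * n * k + 1.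
have P_gt0 : 0 < P by rewrite /P addn1.
rewrite /front_tag {1}(divn_eq x P) (nth_flatten_uniform _ _ (front_tag_uniform n k)) ?ltn_pmod //.
rewrite nth_nseq ltn_divLR // mulnC x_lt nth_cat size_nseq /tag_bit mulnA -/P.
case: ltnP => lt_x; first by rewrite /ones nth_nseq lt_x.
by case: (x %% P - 3 * n * k) => [|[]].
Qed.

Lemma flatten_nseq_zeros j l : flatten (nseq j (zeros l)) = zeros (j * l).
Proof. by elim: j => //= j ->; rewrite /zeros -nseqD mulSn. Qed.

Lemma size_encode n k i j e : 0 < i < j -> j <= k -> valid_edge n e ->
  size (encode n k i j e) = n * k.
Proof.
move=> /andP [i_gt0 i_lt] j_le /andP [/andP [e1_gt0 e1_lt] e2_le].
rewrite /encode !flatten_nseq_zeros !size_cat /zeros !size_nseq /=.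
rewrite -[in RHS](_ : (i - 1) + 1 + (j - i - 1) + 1 + (k - j) = k); last by lia.
rewrite !mulnDr muln1 !(mulnC n); lia.
Qed.

Lemma count_encode n k i j e : count id (encode n k i j e) = 2.
Proof. by rewrite /encode !flatten_nseq_zeros !count_cat /zeros !count_nseq /= !mul0n. Qed.

Lemma size_back_tag n k i' : 0 < i' <= Npairs k ->
  size (back_tag n k i') = Npairs k * bparam n k.
Proof.
move=> i'_in; rewrite /back_tag !size_cat /zeros /ones !size_nseq.
rewrite -[in RHS](_ : (i' - 1) + 1 + (Npairs k - i') = Npairs k); last by lia.
rewrite !mulnDl !mul1n; lia.
Qed.

Lemma count_back_tag n k i' : count id (back_tag n k i') = bparam n k.
Proof. by rewrite /back_tag !count_cat /zeros /ones !count_nseq /= mul0n mul1n addn0. Qed.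

Lemma hamming_back_tag n k i' v : 0 < i' <= Npairs k -> size v = Npairs k * bparam n k ->
  hamming v (back_tag n k i') + 2 * count id (back_segment n k i' v) = count id v + bparam n k.
Proof.
move=> i'_in size_v; rewrite /back_tag /back_segment.
set b := bparam n k; set a := (i' - 1) * b.
have ab : a + b = i' * b by rewrite /a -mulSnr subn1 prednK //; lia.
have ab_le : a + b <= size v by rewrite size_v ab leq_mul2r; lia.
have size_rest : size (drop b (drop a v)) = (Npairs k - i') * b.
  by rewrite !size_drop size_v mulnBl -ab; lia.
rewrite hamming_catr ?size_nseq; last by lia.
rewrite hamming_catr ?size_nseq ?size_drop; last by lia.
rewrite hamming_zeros ?hamming_ones ?hamming_zeros ?size_takel // ?size_drop; try lia.
have count_v := congr1 (count id) (cat_take_drop a v).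
have count_dv := congr1 (count id) (cat_take_drop b (drop a v)).
have := count_size id (take b (drop a v)).
rewrite !count_cat size_takel ?size_drop in count_v count_dv *; lia.
Qed.

Lemma nth_front_tag_cat n k t x : x < (3 * n * k + 1) * (n * k) ->
  nth false (front_tag n k ++ t) x = tag_bit (n * k) x.
Proof. by move=> x_lt; rewrite nth_cat size_front_tag x_lt nth_front_tag. Qed.

Lemma size_template n k : size (template n k) = Lparam n k.
Proof. by rewrite /template !size_cat size_front_tag /ones /zeros !size_nseq /Lparam addnA. Qed.

Lemma nth_template n k x :
  nth false (template n k) x =
  if x < (3 * n * k + 1) * (n * k) then tag_bit (n * k) x
  else x < (3 * n * k + 1) * (n * k) + n * k.
Proof.
case: ifP => x_lt; first exact: nth_front_tag_cat.
rewrite /template nth_cat size_front_tag x_lt nth_cat /ones /zeros size_nseq !nth_nseq.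
by case: ltnP => ?; [symmetry; apply/idP | rewrite if_same; symmetry; apply/negbTE]; lia.
Qed.

Lemma Lparam_eq n k :
  Lparam n k = n * k * (3 * (n * k) + 1) + n * k + Npairs k * bparam n k.
Proof. by rewrite /Lparam mulnC mulnA. Qed.

Lemma hamming_template_misaligned n k tx ty r :
  3 <= k -> 2 <= n ->
  size tx = n * k + Npairs k * bparam n k -> size ty = n * k + Npairs k * bparam n k ->
  count id tx <= bparam n k + 2 -> 0 < r < Lparam n k ->
  2 * dparam n k <
    hamming (template n k) (drop r (front_tag n k ++ tx) ++ take r (front_tag n k ++ ty)).
Proof.
move=> k_ge3 n_ge2 size_tx size_ty count_tx /andP [r_gt0].
rewrite Lparam_eq => r_lt.
have eF : (3 * n * k + 1) * (n * k) = n * k * (3 * (n * k) + 1) by rewrite mulnC mulnA.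
have size_front y : size (front_tag n k ++ y) = size y + (3 * n * k + 1) * (n * k).
  by rewrite size_cat size_front_tag addnC.
have front y x : x < n * k * (3 * (n * k) + 1) ->
    nth false (front_tag n k ++ y) x = tag_bit (n * k) x.
  by rewrite -eF; apply: nth_front_tag_cat.
have tail_X a l : n * k * (3 * (n * k) + 1) <= a ->
    count id (take l (drop a (front_tag n k ++ tx))) <= bparam n k + 2.
  move=> le_a; rewrite drop_cat size_front_tag eF ltnNge le_a /=.
  exact: leq_trans (count_take_drop_le _ _ _) count_tx.
move: (size_front tx) (size_front ty) (front tx) (front ty) tail_X; rewrite size_tx size_ty eF.
move: (front_tag n k ++ tx) (front_tag n k ++ ty) => X Y size_X size_Y front_X front_Y tail_X.
have size_u : size (drop r X ++ take r Y) = Lparam n k.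
  rewrite size_cat size_drop size_takel ?Lparam_eq; lia.
rewrite hamming_count size_template ?size_u // Lparam_eq /dparam.
apply: (@mismatches_misaligned (n * k) k (bparam n k) (Npairs k * bparam n k) r) => //.
- by rewrite leq_mul2r n_ge2 orbT.
- by rewrite leq_mul2r Npairs_ge ?orbT.
- by move=> x; rewrite nth_template eF.
- move=> x x_lt.
  by rewrite nth_drop_cat_take ?size_X ?size_Y ?ifT ?front_X //; lia.
- move=> x x_lt /andP [le_x x_lt'].
  rewrite nth_drop_cat_take ?size_X ?size_Y ?ifF ?front_Y; try lia.
  by congr tag_bit; lia.
- move=> a l F_le le_L.
  rewrite (@eq_in_count _ _ (fun x => nth false X (r + x))); last first.
    move=> x; rewrite mem_iota => /andP [_ x_lt].
    by rewrite nth_drop_cat_take ?size_X ?size_Y ?ifT //; lia.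
  rewrite -[fun x => _]/(nth false X \o addn r) -count_map -iotaDl count_nth_iota.
  exact: tail_X.
Qed.

Lemma pairs_head k : 3 <= k -> exists rest, pairs k = (1, 2) :: (1, 3) :: rest.
Proof. by case: k => [|[|[|k]]] // _; eexists. Qed.

Lemma pair_pos12 k : 3 <= k -> pair_pos k 1 2 = 1.
Proof. by move=> /pairs_head [rest pairs_k]; rewrite /pair_pos pairs_k. Qed.

Lemma pair_pos13 k : 3 <= k -> pair_pos k 1 3 = 2.
Proof. by move=> /pairs_head [rest pairs_k]; rewrite /pair_pos pairs_k. Qed.

Lemma Lparam_gt0 n k : 3 <= k -> 0 < Lparam n k.
Proof.
move=> k_ge3; apply: leq_trans (leq_addl _ _) => /=.
by rewrite muln_gt0 /bparam addn2 andbT (leq_trans _ (Npairs_ge k_ge3)) //; lia.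
Qed.

Lemma size_block_tail n k i j e : 0 < i < j -> j <= k -> valid_edge n e ->
  pair_pos k i j <= Npairs k ->
  size (encode n k i j e ++ back_tag n k (pair_pos k i j)) = n * k + Npairs k * bparam n k.
Proof. by move=> ij j_le e_valid pos_le; rewrite size_cat size_encode // size_back_tag. Qed.

Lemma size_block n k i j e : 0 < i < j -> j <= k -> valid_edge n e ->
  pair_pos k i j <= Npairs k -> size (block n k i j e) = Lparam n k.
Proof.
move=> ij j_le e_valid pos_le.
by rewrite /block size_cat size_block_tail // size_front_tag /Lparam addnA.
Qed.

Lemma count_block_tail n k i j e :
  count id (encode n k i j e ++ back_tag n k (pair_pos k i j)) = bparam n k + 2.
Proof. by rewrite count_cat count_encode count_back_tag addnC. Qed.

Lemma close_substring_same_size d s c : size c = size s ->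
  close_substring d s c -> hamming s c <= d.
Proof.
move=> size_c [p [p_le close_p]].
by move: close_p; rewrite (_ : p = 0) ?drop0 -?size_c ?take_size //; lia.
Qed.

Lemma close_choice_n_ge2 n k E s i j d : 3 <= k -> all (valid_edge n) E ->
  size s = Lparam n k -> close_substring d s (choice_string n k E i j) -> 2 <= n.
Proof.
move=> k_ge3 E_valid size_s [p [p_le _]].
case: E E_valid p_le => [|e E'] /=; last by case/andP => /andP [/andP [? ?] ?] *; lia.
by rewrite size_s; have := Lparam_gt0 n k_ge3; lia.
Qed.

Lemma close_choice_block n k E s i j :
  3 <= k -> 2 <= n -> all (valid_edge n) E -> 0 < i < j -> j <= k ->
  pair_pos k i j <= Npairs k -> size s = Lparam n k ->
  hamming s (template n k) <= dparam n k ->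
  close_substring (dparam n k) s (choice_string n k E i j) ->
  exists2 e, e \in E & hamming s (block n k i j e) <= dparam n k.
Proof.
move=> k_ge3 n_ge2 E_valid ij j_le pos_le size_s close_t [p []].
set L := Lparam n k.
have blocks_uniform : all (fun w => size w == L) [seq block n k i j e | e <- E].
  by rewrite all_map; apply/allP => e /(allP E_valid) e_valid /=; rewrite size_block.
rewrite /choice_string (size_flatten_uniform blocks_uniform) size_map size_s -/L.
have L_gt0 : 0 < L := Lparam_gt0 n k_ge3.
rewrite {1 2}(divn_eq p L) take_drop_flatten_uniform //; last by rewrite ltnW ?ltn_pmod.
set q := p %/ L; set r := p %% L => p_le close_p.
have q_lt : q < size E by rewrite -(ltn_pmul2r L_gt0); lia.
rewrite (nth_map (0, 0)) // in close_p.
case: (posnP r) => [r0 | r_gt0].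
  by exists (nth (0, 0) E q); [exact: mem_nth | rewrite r0 drop0 take0 cats0 in close_p].
exfalso.
have q1_lt : q.+1 < size E by rewrite -(ltn_pmul2r L_gt0); lia.
rewrite (nth_map (0, 0)) // in close_p.
have valid_nth q' : q' < size E -> valid_edge n (nth (0, 0) E q').
  by move=> q'_lt; apply: (allP E_valid); rewrite mem_nth.
have r_in : 0 < r < L by rewrite r_gt0 ltn_pmod.
have far := hamming_template_misaligned k_ge3 n_ge2
  (size_block_tail ij j_le (valid_nth q q_lt) pos_le)
  (size_block_tail ij j_le (valid_nth q.+1 q1_lt) pos_le)
  (eq_leq (count_block_tail n k i j _)) r_in.
move: far close_p; rewrite /block; set u := drop r _ ++ take r _ => far close_u.
have size_u : size u = L.
  rewrite size_cat size_drop size_takel -?/(block n k i j _) ?size_block ?valid_nth //.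
    by rewrite subnK // ltnW ?ltn_pmod.
  by rewrite ltnW ?ltn_pmod.
have := @hamming_triangle (template n k) s u.
rewrite size_template size_s size_u [hamming _ s]hamming_sym => /(_ erefl erefl).
lia.
Qed.

Lemma hamming_parts_le n k s mid tail : size s = Lparam n k -> size mid = n * k ->
  hamming (encoding_part n k s) mid + hamming (back_part n k s) tail <=
  hamming s (front_tag n k ++ mid ++ tail).
Proof.
move=> size_s size_mid.
rewrite hamming_catr size_front_tag ?size_s ?/Lparam; last by lia.
rewrite hamming_catr size_mid ?size_drop ?size_s ?/Lparam; last by lia.
by rewrite leq_addl.
Qed.

Lemma size_back_part n k s : size s = Lparam n k -> size (back_part n k s) = Npairs k * bparam n k.
Proof. by move=> size_s; rewrite !size_drop size_s /Lparam; lia. Qed.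

Lemma size_encoding_part n k s : size s = Lparam n k -> size (encoding_part n k s) = n * k.
Proof. by move=> size_s; rewrite size_takel // size_drop size_s /Lparam; lia. Qed.

Lemma template_close_bound n k s : 0 < n -> size s = Lparam n k ->
  hamming s (template n k) <= dparam n k ->
  k + count id (back_part n k s) <= count id (encoding_part n k s).
Proof.
move=> n_gt0 size_s close_t.
have := @hamming_parts_le n k s (ones (n * k)) (zeros (Npairs k * bparam n k))
  size_s (size_nseq _ _).
rewrite hamming_ones ?hamming_zeros ?size_encoding_part ?size_back_part //.
have := count_size id (encoding_part n k s); rewrite size_encoding_part //.
have : k <= n * k by rewrite leq_pmull.
move: close_t; rewrite /dparam /template; lia.
Qed.

Lemma block_close_bound n k i j e s : 2 <= n -> 0 < i < j -> j <= k -> valid_edge n e ->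
  pair_pos k i j <= Npairs k -> size s = Lparam n k ->
  hamming s (block n k i j e) <= dparam n k ->
  count id (encoding_part n k s) + count id (back_part n k s) <=
  k + 2 * count id (back_segment n k (pair_pos k i j) (back_part n k s)).
Proof.
move=> n_ge2 ij j_le e_valid pos_le size_s close_b.
have := @hamming_parts_le n k s _ (back_tag n k (pair_pos k i j))
  size_s (size_encode ij j_le e_valid).
have := count_le_hamming (etrans (size_encoding_part size_s) (esym (size_encode ij j_le e_valid))).
have pos_in : 0 < pair_pos k i j <= Npairs k by [].
have := hamming_back_tag pos_in (size_back_part size_s).
rewrite count_encode; move: close_b; rewrite /dparam /bparam /block.
have : 2 * k <= n * k by rewrite leq_mul2r n_ge2 orbT.
lia.
Qed.

Unset Implicit Arguments.

Theorem lemma4 (n k : nat) (E : seq (nat * nat)) (s : seq bool) :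
  3 <= k ->
  uniq E ->
  all (fun e : nat * nat => (0 < e.1) && (e.1 < e.2) && (e.2 <= n)) E ->
  size s = Lparam n k ->
  close_substring (dparam n k) s (template n k) ->
  (forall i j, 1 <= i -> i < j -> j <= k ->
     close_substring (dparam n k) s (choice_string n k E i j)) ->
  count id (encoding_part n k s) = k.
Proof.
move=> k_ge3 _ E_valid size_s close_t close_c.
have n_ge2 := close_choice_n_ge2 k_ge3 E_valid size_s (close_c 1 2 isT isT (ltnW k_ge3)).
have N_ge := Npairs_ge k_ge3.
have ham_t := close_substring_same_size (etrans (size_template n k) (esym size_s)) close_t.
have close_block i j : 0 < i < j -> j <= k -> pair_pos k i j <= Npairs k ->
    exists2 e, e \in E & hamming s (block n k i j e) <= dparam n k.
  move=> ij j_le pos_le; case/andP: (ij) => i_gt0 i_lt.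
  exact: close_choice_block k_ge3 n_ge2 E_valid ij j_le pos_le size_s ham_t
    (close_c i j i_gt0 i_lt j_le).
have pos12 : pair_pos k 1 2 <= Npairs k by rewrite pair_pos12 //; lia.
have pos13 : pair_pos k 1 3 <= Npairs k by rewrite pair_pos13 //; lia.
have [e12 /(allP E_valid) e12_valid close12] := close_block 1 2 isT (ltnW k_ge3) pos12.
have [e13 /(allP E_valid) e13_valid close13] := close_block 1 3 isT k_ge3 pos13.
have := block_close_bound n_ge2 (isT : 0 < 1 < 2) (ltnW k_ge3) e12_valid pos12 size_s close12.
have := block_close_bound n_ge2 (isT : 0 < 1 < 3) k_ge3 e13_valid pos13 size_s close13.
have := template_close_bound (ltnW n_ge2) size_s ham_t.
have := count_take_add_le (back_part n k s) (bparam n k) (bparam n k).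
rewrite pair_pos12 // pair_pos13 // /back_segment /= mul0n mul1n drop0.
lia.
Qed.
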